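(* Let $R$ be an associative ring with identity and $a,b,c,d\in R$ such that $a$ has a $(b,c)$-inverse $a^{\|(b,c)}$. Let $c^{-}$ be any (fixed) inner inverse of $c$ and put $f=c^{-}c$. Then the following are equivalent: (i) $d$ has a $(b,c)$-inverse; (ii) $f\in fda^{\|(b,c)}fR\cap Rfda^{\|(b,c)}f$; (iii) $fda^{\|(b,c)}+1-f$ is invertible in $R$. In this case $d^{\|(b,c)}=a^{\|(b,c)}(fda^{\|(b,c)}+1-f)^{-1}$.
   Context: For $a,b,c\in R$, $a$ is $(b,c)$-invertible if there exists $y\in R$ with $y\in (bRy)\cap(yRc)$, $yab=b$ and $cay=c$; such $y$ is unique and denoted $a^{\|(b,c)}$. An inner inverse of $c$ is an element $c^{-}$ with $cc^{-}c=c$ (it exists here since $c$ is regular whenever a $(b,c)$-inverse exists). *)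

From HB Require Import structures.
From mathcomp Require Import all_boot all_order all_algebra.
Set Implicit Arguments. Unset Strict Implicit. Unset Printing Implicit Defensive.
Import GRing.Theory.
Local Open Scope ring_scope.

Definition is_bc_inverse (R : pzRingType) (a b c y : R) : Prop :=
  (exists r : R, y = b * r * y) /\ (exists s : R, y = y * s * c)
  /\ y * a * b = b /\ c * a * y = c.

Definition bc_invertible (R : pzRingType) (a b c : R) : Prop :=
  exists y : R, is_bc_inverse a b c y.

Definition is_inverse (R : pzRingType) (x z : R) : Prop := x * z = 1 /\ z * x = 1.

Definition invertible (R : pzRingType) (x : R) : Prop := exists z : R, is_inverse x z.

From HB Require Import structures.
From mathcomp Require Import all_boot all_order all_algebra.
Import GRing.Theory.
Local Open Scope ring_scope.

(* f = c^- c is idempotent, and every (b,c)-inverse z satisfies z f = z; hence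
   p := f d y lies in the corner ring fRf. For such p, p + 1 - f is a unit of R
   iff p is a unit of fRf, which is condition (ii). If z is the (b,c)-inverse of
   d, then f a z is the inverse of f d y in fRf; conversely, if u inverts
   f d y + 1 - f, then y u is the (b,c)-inverse of d, and uniqueness of
   (b,c)-inverses gives the formula. *)

Section Corner.
Context {R : pzRingType} {f : R}.
Hypothesis f_idem : f * f = f.

Lemma mulr_corner_shift {p q : R} : p * f = p -> f * q = q ->
  (p + 1 - f) * (q + 1 - f) = p * q + 1 - f.
Proof.
move=> pf fq; have pfC : p * (1 - f) = 0 by rewrite mulrBr mulr1 pf subrr.
have fCq : (1 - f) * q = 0 by rewrite mulrBl mul1r fq subrr.
have fCfC : (1 - f) * (1 - f) = 1 - f.
  by rewrite mulrBr mulr1 mulrBl mul1r f_idem subrr subr0.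
rewrite -!addrA; move: (1 - f) pfC fCq fCfC => g pg gq gg.
by rewrite mulrDl !mulrDr pg gq gg addr0 add0r.
Qed.

Lemma corner_shift_inverse {p q : R} :
  f * p = p -> p * f = p -> f * q = q -> q * f = q -> p * q = f -> q * p = f ->
  is_inverse (p + 1 - f) (q + 1 - f).
Proof.
move=> fp pf fq qf pq qp.
by split; rewrite mulr_corner_shift // ?pq ?qp addrAC subrr add0r.
Qed.

Section CornerUnit.
Context {p : R}.
Hypotheses (fp : f * p = p) (pf : p * f = p).

Lemma corner_shift_inverseP {u : R} : is_inverse (p + 1 - f) u ->
  [/\ u * (1 - f) = 1 - f, u * p = f & p * u = f].
Proof.
case=> wu uw.
have fw : f * (p + 1 - f) = p by rewrite mulrBr mulrDr mulr1 fp f_idem addrK.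
have wfC : (p + 1 - f) * (1 - f) = 1 - f.
  by have := mulr_corner_shift pf (mulr0 f); rewrite add0r mulr0 add0r.
have ufC : u * (1 - f) = 1 - f by rewrite -{1}wfC mulrA uw mul1r.
split=> //; last by rewrite -fw -mulrA wu mulr1.
have upfC : u * p + (1 - f) = 1 by rewrite -{1}ufC -mulrDr addrA uw.
by rewrite -(addrK (1 - f) (u * p)) upfC opprB addrC subrK.
Qed.

Lemma corner_shift_invertibleP :
  (exists r, f = p * r) /\ (exists s, f = s * p) <-> invertible (p + 1 - f).
Proof.
split=> [[[r fpr] [s fsp]] | [u /corner_shift_inverseP[_ up pu]]].
- have frp : f * r * p = f by rewrite {1}fsp -(mulrA s) -fpr -mulrA fp.
  exists (f * r * f + 1 - f); apply: corner_shift_inverse => //.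
  + by rewrite !mulrA f_idem.
  + by rewrite -mulrA f_idem.
  + by rewrite !mulrA pf -fpr f_idem.
  + by rewrite -mulrA fp frp.
- by split; [exists u | exists u].
Qed.

End CornerUnit.
End Corner.

Section BCInverse.
Context {R : pzRingType} {b c : R}.

Lemma bc_inverse_absorbl {a e y z : R} :
  is_bc_inverse a b c y -> is_bc_inverse e b c z -> z * e * y = y.
Proof. by case=> [[r ->]] _ [_ [_ [zeb _]]]; rewrite !mulrA zeb. Qed.

Lemma bc_inverse_absorbr {a e y z : R} :
  is_bc_inverse a b c y -> is_bc_inverse e b c z -> y * e * z = y.
Proof. by case=> _ [[s ->]] _ [_ [_ [_ cez]]]; rewrite -!mulrA (mulrA c) cez. Qed.

Lemma bc_inverse_uniq {e z z' : R} :
  is_bc_inverse e b c z -> is_bc_inverse e b c z' -> z = z'.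
Proof.
move=> hz hz'.
by rewrite -(bc_inverse_absorbl hz hz') (bc_inverse_absorbr hz' hz).
Qed.

Context {cm : R}.
Hypothesis c_inner : c * cm * c = c.

Lemma inner_idem : cm * c * (cm * c) = cm * c.
Proof. by rewrite mulrA -(mulrA cm c cm) -mulrA c_inner. Qed.

Lemma bc_inverse_mul_inner {a y : R} : is_bc_inverse a b c y -> y * (cm * c) = y.
Proof. by case=> _ [[s ->]] _; rewrite -!mulrA (mulrA c) c_inner. Qed.

End BCInverse.

Section Perturbation.
Context {R : pzRingType} {a b c d y cm f : R}.
Hypotheses (hy : is_bc_inverse a b c y) (c_inner : c * cm * c = c) (f_def : f = cm * c).

Let f_idem : f * f = f.
Proof. by rewrite f_def inner_idem. Qed.

Let mul_f {e w : R} : is_bc_inverse e b c w -> w * f = w.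
Proof. by rewrite f_def; apply: bc_inverse_mul_inner. Qed.

Let yf : y * f = y := mul_f hy.

Let f_fdy : f * (f * d * y) = f * d * y.
Proof. by rewrite !mulrA f_idem. Qed.

Let fdy_f : f * d * y * f = f * d * y.
Proof. by rewrite -mulrA yf. Qed.

Lemma bc_inverse_shift_inverse {z : R} : is_bc_inverse d b c z ->
  is_inverse (f * d * y + 1 - f) (f * a * z + 1 - f).
Proof.
move=> hz; have zf : z * f = z := mul_f hz.
have fez (e w : R) : is_bc_inverse e b c w -> f * e * w = f.
  by case=> _ [_ [_ cew]]; rewrite f_def -!mulrA (mulrA c) cew.
apply: corner_shift_inverse => //; rewrite ?f_fdy ?fdy_f //.
- by rewrite !mulrA f_idem.
- by rewrite -mulrA zf.
- by rewrite -!mulrA (mulrA y) yf (mulrA y) (bc_inverse_absorbl hz hy) mulrA fez.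
- by rewrite -!mulrA (mulrA z) zf (mulrA z) (bc_inverse_absorbl hy hz) mulrA fez.
Qed.

Lemma shift_inverse_bc_inverse {u : R} : is_inverse (f * d * y + 1 - f) u ->
  is_bc_inverse d b c (y * u).
Proof.
move=> hu; have [ufC ufdy _] := corner_shift_inverseP f_idem f_fdy fdy_f hu.
have yuf : y * u * f = y * u.
  have : y * u * (1 - f) = 0 by rewrite -mulrA ufC mulrBr mulr1 yf subrr.
  by rewrite mulrBr mulr1 => /subr0_eq/esym.
have yudy : y * u * d * y = y by rewrite -{1}yuf -!mulrA (mulrA f) ufdy yf.
have [[r yry] [_ [yab _]]] := hy.
split; first by exists r; rewrite {1}yry -mulrA.
split; first by exists cm; rewrite -mulrA -f_def yuf.
split; first by rewrite -{1}yab !mulrA yudy yab.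
have cw : c * (f * d * y + 1 - f) = c * d * y.
  by rewrite f_def mulrBr mulrDr mulr1 !mulrA c_inner addrK.
by rewrite mulrA -cw -mulrA (proj1 hu) mulr1.
Qed.

Lemma bc_invertible_shiftP :
  bc_invertible d b c <-> invertible (f * d * y + 1 - f).
Proof.
split=> [[z /bc_inverse_shift_inverse hz] | [u /shift_inverse_bc_inverse hyu]].
  by exists (f * a * z + 1 - f).
by exists (y * u).
Qed.

Lemma corner_fdy_invertibleP :
  (exists r, f = f * d * y * f * r) /\ (exists s, f = s * (f * d * y * f))
  <-> invertible (f * d * y + 1 - f).
Proof. by rewrite fdy_f; exact: (corner_shift_invertibleP f_idem f_fdy fdy_f). Qed.

Lemma bc_inverse_eq_shift_inverse {z u : R} : is_bc_inverse d b c z ->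
  is_inverse (f * d * y + 1 - f) u -> z = y * u.
Proof. by move=> hz /shift_inverse_bc_inverse; apply: bc_inverse_uniq. Qed.

End Perturbation.

Theorem theorem3p14 (R : pzRingType) (a b c d y cm : R)
  (hy : is_bc_inverse a b c y) (hcm : c * cm * c = c) :
  let f := cm * c in
  (bc_invertible d b c <->
     ((exists r : R, f = f * d * y * f * r) /\ (exists s : R, f = s * (f * d * y * f)))) /\
  (bc_invertible d b c <-> invertible (f * d * y + 1 - f)) /\
  (forall z u : R, is_bc_inverse d b c z -> is_inverse (f * d * y + 1 - f) u ->
     z = y * u).
Proof.
move=> f; have f_def : f = cm * c by []; clearbody f.
split; first exact: iff_trans (bc_invertible_shiftP hy hcm f_def)
                              (iff_sym (corner_fdy_invertibleP hy hcm f_def)).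
split; first exact: bc_invertible_shiftP hy hcm f_def.
move=> z u; exact: (bc_inverse_eq_shift_inverse hy hcm f_def).
Qed.
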